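(* Let $G$ be an $n$-resource selection game with I.D.-dependent weighting. Then $h^s_j=h^{s'}_j$ for every $j\in[n]$ and every two strong Nash equilibria $s,s'$ of $G$.
   Context: For $n,k\in\mathbb{N}$, an $n$-resource/$k$-player-type resource selection game with I.D.-dependent weighting is a triple $\bigl((f_j)_{j=1}^n;(R^i)_{i=1}^k;(f^i_j)_{i\in[k],j\in R^i}\bigr)$ where each $f_j:[0,\infty)\to\mathbb{R}$ is nondecreasing, each $R^i$ is a nonempty subset of $[n]$, and each $f^i_j:[0,1]\to[0,\infty)$ is increasing (no continuity assumed). A consumption profile is a map $s:[k]\to[0,\infty)^{[n]}$ with $s_j(i)=0$ for $j\notin R^i$ and $\sum_j s_j(i)=1$. The weighted load of resource $j$ is $\mu^s_j=\sum_{i:\,j\in R^i}f^i_j(s_j(i))$ and its cost is $h^s_j=f_j(\mu^s_j)$. $s$ is a Nash equilibrium if for every $i\in[k]$, every $\ell$ with $s_\ell(i)>0$ and every $j\in R^i$, $h^s_\ell\le h^s_j$. For a Nash equilibrium $s$ and $i\in[k]$, let $h^i=h^s_\ell$ for any $\ell$ with $s_\ell(i)>0$. A Nash equilibrium $s$ is strong if there is no consumption profile $s'\ne s$ such that for every $i\in[k]$ and every $\ell$ with $s'_\ell(i)>s_\ell(i)$, $h^{s'}_\ell<h^i$. *)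

From Stdlib Require Export Reals Lra.
Open Scope R_scope.

Fixpoint rsum (m : nat) (g : nat -> R) : R :=
  match m with
  | O => 0
  | S m' => rsum m' g + g m'
  end.

(* A game with n resources 0..n-1 and k player types 0..k-1:
   f j        : cost function of resource j
   Rs i j     : membership j \in R^i (boolean)
   fw i j     : the weighting f^i_j
   A profile s : nat -> nat -> R, with s i j = s_j(i). *)

Record game (n k : nat) := Game {
  f  : nat -> R -> R;
  Rs : nat -> nat -> bool;
  fw : nat -> nat -> R -> R
}.
Arguments f {n k}.
Arguments Rs {n k}.
Arguments fw {n k}.

Definition valid_game {n k} (G : game n k) : Prop :=
  (forall j, (j < n)%nat -> forall x y, 0 <= x -> x <= y -> f G j x <= f G j y)
  /\ (forall i, (i < k)%nat ->
        (forall j, Rs G i j = true -> (j < n)%nat)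
        /\ (exists j, Rs G i j = true))
  /\ (forall i j, (i < k)%nat -> Rs G i j = true ->
        (forall x, 0 <= x <= 1 -> 0 <= fw G i j x)
        /\ (forall x y, 0 <= x -> x < y -> y <= 1 -> fw G i j x < fw G i j y)).

Definition profile {n k} (G : game n k) (s : nat -> nat -> R) : Prop :=
  forall i, (i < k)%nat ->
    (forall j, (j < n)%nat -> 0 <= s i j)
    /\ (forall j, (j < n)%nat -> Rs G i j = false -> s i j = 0)
    /\ rsum n (s i) = 1.

Definition load {n k} (G : game n k) (s : nat -> nat -> R) (j : nat) : R :=
  rsum k (fun i => if Rs G i j then fw G i j (s i j) else 0).

Definition cost {n k} (G : game n k) (s : nat -> nat -> R) (j : nat) : R :=
  f G j (load G s j).

Definition nash {n k} (G : game n k) (s : nat -> nat -> R) : Prop :=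
  profile G s /\
  forall i l j, (i < k)%nat -> (l < n)%nat -> (j < n)%nat ->
    0 < s i l -> Rs G i j = true -> cost G s l <= cost G s j.

(* h^i = h^s_{l0} for any l0 with s_{l0}(i) > 0 (well defined at a NE). *)
Definition strong_nash {n k} (G : game n k) (s : nat -> nat -> R) : Prop :=
  nash G s /\
  ~ exists s', profile G s'
      /\ (exists i j, (i < k)%nat /\ (j < n)%nat /\ s' i j <> s i j)
      /\ (forall i l, (i < k)%nat -> (l < n)%nat -> s i l < s' i l ->
            forall l0, (l0 < n)%nat -> 0 < s i l0 ->
              cost G s' l < cost G s l0).

(* If a strong equilibrium s had some resource l costlier than under another
   equilibrium s', then some player type i puts less weight on l under s' than
   under s, so its equilibrium cost drops from s to s'.  Let the coalition of
   all player types whose cost drops switch from s to s'.  A resource that a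
   member moves weight onto is cheaper under s' than under s; no outsider uses
   it under s (it would then have joined the coalition), so its load after the
   switch is at most its load under s'.  Every member thus strictly gains,
   contradicting strength.  Hence costs under s are bounded by those under s',
   and symmetry gives equality. *)

From Stdlib Require Import Lia Classical ClassicalEpsilon.
Open Scope R_scope.

Lemma rsum_le m g h :
  (forall i, (i < m)%nat -> g i <= h i) -> rsum m g <= rsum m h.
Proof.
  induction m as [|m IH]; simpl; intros Hgh; [lra|].
  assert (rsum m g <= rsum m h) by (apply IH; intros; apply Hgh; lia).
  assert (g m <= h m) by (apply Hgh; lia).
  lra.
Qed.

Lemma rsum_lt_exists m g h :
  rsum m g < rsum m h -> exists i, (i < m)%nat /\ g i < h i.
Proof.
  intros Hlt. apply NNPP; intros Hnone.
  assert (rsum m h <= rsum m g); [|lra].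
  apply rsum_le; intros i Hi.
  apply Rnot_lt_le; intros Hi'. apply Hnone. now exists i.
Qed.

Lemma rsum_nonneg m g : (forall i, (i < m)%nat -> 0 <= g i) -> 0 <= rsum m g.
Proof.
  induction m as [|m IH]; simpl; intros Hg; [lra|].
  assert (0 <= rsum m g) by (apply IH; intros; apply Hg; lia).
  assert (0 <= g m) by (apply Hg; lia).
  lra.
Qed.

Lemma rsum_term_le m g j :
  (forall i, (i < m)%nat -> 0 <= g i) -> (j < m)%nat -> g j <= rsum m g.
Proof.
  induction m as [|m IH]; simpl; intros Hg Hj; [lia|].
  assert (0 <= rsum m g) by (apply rsum_nonneg; intros; apply Hg; lia).
  destruct (Nat.eq_dec j m) as [->|Hjm].
  - lra.
  - assert (g j <= rsum m g) by (apply IH; [intros; apply Hg; lia | lia]).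
    assert (0 <= g m) by (apply Hg; lia).
    lra.
Qed.

Lemma rsum_neq0_exists m g : rsum m g <> 0 -> exists j, (j < m)%nat /\ g j <> 0.
Proof.
  induction m as [|m IH]; simpl; intros Hg; [lra|].
  destruct (Req_dec (g m) 0) as [Hm|Hm].
  - destruct IH as [j [Hj Hgj]]; [lra|]. exists j; split; [lia | exact Hgj].
  - exists m; split; [lia | exact Hm].
Qed.

Section ResourceSelection.
Variables (n k : nat) (G : game n k).

Lemma profile_nonneg s i j :
  profile G s -> (i < k)%nat -> (j < n)%nat -> 0 <= s i j.
Proof. intros Hs Hi Hj. exact (proj1 (Hs i Hi) j Hj). Qed.

Lemma profile_le1 s i j :
  profile G s -> (i < k)%nat -> (j < n)%nat -> s i j <= 1.
Proof.
  intros Hs Hi Hj. destruct (Hs i Hi) as [Hnn [_ Hsum]].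
  rewrite <- Hsum. now apply rsum_term_le.
Qed.

Lemma profile_support_allowed s i j :
  profile G s -> (i < k)%nat -> (j < n)%nat -> 0 < s i j -> Rs G i j = true.
Proof.
  intros Hs Hi Hj Hpos. destruct (Rs G i j) eqn:E; [reflexivity|].
  destruct (Hs i Hi) as [_ [Hout _]]. rewrite (Hout j Hj E) in Hpos. lra.
Qed.

Lemma profile_support_exists s i :
  profile G s -> (i < k)%nat -> exists j, (j < n)%nat /\ 0 < s i j.
Proof.
  intros Hs Hi. destruct (Hs i Hi) as [Hnn [_ Hsum]].
  destruct (rsum_neq0_exists n (s i)) as [j [Hj Hsj]]; [lra|].
  exists j; split; [exact Hj|]. specialize (Hnn j Hj). lra.
Qed.

Hypothesis HG : valid_game G.

Lemma fw_nonneg i j x :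
  (i < k)%nat -> Rs G i j = true -> 0 <= x <= 1 -> 0 <= fw G i j x.
Proof. intros Hi Hij. destruct HG as [_ [_ Hfw]]. exact (proj1 (Hfw i j Hi Hij) x). Qed.

Lemma fw_le i j x y :
  (i < k)%nat -> Rs G i j = true -> 0 <= x -> x <= y -> y <= 1 ->
  fw G i j x <= fw G i j y.
Proof.
  intros Hi Hij Hx Hxy Hy. destruct HG as [_ [_ Hfw]].
  destruct (Rle_lt_or_eq_dec _ _ Hxy) as [Hlt | ->]; [|lra].
  left. exact (proj2 (Hfw i j Hi Hij) x y Hx Hlt Hy).
Qed.

Lemma load_nonneg s j : profile G s -> (j < n)%nat -> 0 <= load G s j.
Proof.
  intros Hs Hj. apply rsum_nonneg; intros i Hi.
  destruct (Rs G i j) eqn:Hij; [|lra].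
  apply fw_nonneg; auto.
  split; [now apply profile_nonneg | now apply profile_le1].
Qed.

Lemma load_le s s' j :
  profile G s -> profile G s' -> (j < n)%nat ->
  (forall i, (i < k)%nat -> Rs G i j = true -> s i j <= s' i j) ->
  load G s j <= load G s' j.
Proof.
  intros Hs Hs' Hj Hle. apply rsum_le; intros i Hi.
  destruct (Rs G i j) eqn:Hij; [|lra].
  apply fw_le; auto; [now apply profile_nonneg | now apply profile_le1].
Qed.

Lemma cost_le_of_load_le s s' j :
  profile G s -> (j < n)%nat -> load G s j <= load G s' j ->
  cost G s j <= cost G s' j.
Proof.
  intros Hs Hj Hle. destruct HG as [Hf _].
  apply Hf; [exact Hj | now apply load_nonneg | exact Hle].
Qed.

Lemma share_drop_of_cost_drop s s' j :
  profile G s -> profile G s' -> (j < n)%nat -> cost G s' j < cost G s j ->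
  exists i, (i < k)%nat /\ Rs G i j = true /\ s' i j < s i j.
Proof.
  intros Hs Hs' Hj Hcost.
  assert (Hload : load G s' j < load G s j).
  { apply Rnot_le_lt; intros Hle.
    pose proof (cost_le_of_load_le s s' j Hs Hj Hle). lra. }
  destruct (rsum_lt_exists _ _ _ Hload) as [i [Hi Hlt]].
  destruct (Rs G i j) eqn:Hij; [|lra].
  exists i; split; [exact Hi | split; [exact Hij |]].
  apply Rnot_le_lt; intros Hle.
  pose proof (fw_le i j (s i j) (s' i j) Hi Hij
                (profile_nonneg s i j Hs Hi Hj) Hle (profile_le1 s' i j Hs' Hi Hj)).
  lra.
Qed.

(* [h^{s'}(i) < h^s(i)], with the equilibrium costs read off support resources [a] of [s i] and [b] of [s' i]. *)
Definition improves (s s' : nat -> nat -> R) (i : nat) : Prop :=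
  exists a b, (a < n)%nat /\ (b < n)%nat /\ 0 < s i a /\ 0 < s' i b /\
    cost G s' b < cost G s a.

Lemma improves_of_cost_drop s s' i j :
  nash G s' -> (i < k)%nat -> (j < n)%nat -> Rs G i j = true ->
  0 < s i j -> cost G s' j < cost G s j -> improves s s' i.
Proof.
  intros [Hs' Ns'] Hi Hj Hij Hpos Hcost.
  destruct (profile_support_exists s' i Hs' Hi) as [b [Hb Hbpos]].
  exists j, b; repeat split; auto.
  pose proof (Ns' i b j Hi Hb Hj Hbpos Hij). lra.
Qed.

Lemma improves_cost_lt s s' i l0 l1 :
  nash G s -> nash G s' -> (i < k)%nat -> improves s s' i ->
  (l0 < n)%nat -> (l1 < n)%nat -> 0 < s i l0 -> 0 < s' i l1 ->
  cost G s' l1 < cost G s l0.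
Proof.
  intros [Hs Ns] [Hs' Ns'] Hi [a [b [Ha [Hb [Hapos [Hbpos Hab]]]]]] Hl0 Hl1 H0 H1.
  pose proof (Ns i a l0 Hi Ha Hl0 Hapos (profile_support_allowed s i l0 Hs Hi Hl0 H0)).
  pose proof (Ns' i l1 b Hi Hl1 Hb H1 (profile_support_allowed s' i b Hs' Hi Hb Hbpos)).
  lra.
Qed.

Definition coalition_move (s s' : nat -> nat -> R) : nat -> nat -> R :=
  fun i j => if excluded_middle_informative (improves s s' i) then s' i j else s i j.

Lemma coalition_move_in s s' i j : improves s s' i -> coalition_move s s' i j = s' i j.
Proof.
  intros Himp. unfold coalition_move.
  destruct (excluded_middle_informative _); [reflexivity | contradiction].
Qed.

Lemma coalition_move_out s s' i j : ~ improves s s' i -> coalition_move s s' i j = s i j.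
Proof.
  intros Himp. unfold coalition_move.
  destruct (excluded_middle_informative _); [contradiction | reflexivity].
Qed.

Lemma coalition_move_profile s s' :
  profile G s -> profile G s' -> profile G (coalition_move s s').
Proof.
  intros Hs Hs' i Hi. unfold coalition_move.
  destruct (excluded_middle_informative _); auto.
Qed.

Lemma coalition_move_cost_le s s' j :
  nash G s -> nash G s' -> (j < n)%nat -> cost G s' j < cost G s j ->
  cost G (coalition_move s s') j <= cost G s' j.
Proof.
  intros [Hs Ns] [Hs' Ns'] Hj Hcost.
  apply cost_le_of_load_le; [now apply coalition_move_profile | exact Hj |].
  apply load_le; [now apply coalition_move_profile | exact Hs' | exact Hj |].
  intros i Hi Hij.
  destruct (classic (improves s s' i)) as [Himp | Hout].
  - rewrite coalition_move_in by exact Himp. lra.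
  - rewrite coalition_move_out by exact Hout.
    destruct (Rle_lt_or_eq_dec _ _ (profile_nonneg s i j Hs Hi Hj)) as [Hpos | <-].
    + exfalso. apply Hout.
      apply (improves_of_cost_drop s s' i j); auto. split; assumption.
    + now apply profile_nonneg.
Qed.

Lemma strong_nash_cost_le s s' j :
  strong_nash G s -> nash G s' -> (j < n)%nat -> cost G s j <= cost G s' j.
Proof.
  intros [Ns Hstrong] Ns' Hj. pose proof Ns as [Hs Nsr]. pose proof Ns' as [Hs' _].
  apply Rnot_lt_le; intros Hcost.
  destruct (share_drop_of_cost_drop s s' j Hs Hs' Hj Hcost) as [i0 [Hi0 [Hi0j Hdrop]]].
  assert (Hpos : 0 < s i0 j) by (pose proof (profile_nonneg s' i0 j Hs' Hi0 Hj); lra).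
  assert (Himp0 : improves s s' i0) by (now apply (improves_of_cost_drop s s' i0 j)).
  apply Hstrong. exists (coalition_move s s'); split; [|split].
  - now apply coalition_move_profile.
  - exists i0, j; repeat split; auto.
    rewrite coalition_move_in by exact Himp0. lra.
  - intros i l Hi Hl Hgrow l0 Hl0 H0.
    destruct (classic (improves s s' i)) as [Himp | Hout];
      [| rewrite coalition_move_out in Hgrow by exact Hout; lra].
    rewrite coalition_move_in in Hgrow by exact Himp.
    assert (H1 : 0 < s' i l) by (pose proof (profile_nonneg s i l Hs Hi Hl); lra).
    assert (Hlt0 : cost G s' l < cost G s l0) by (now apply (improves_cost_lt s s' i)).
    pose proof (Nsr i l0 l Hi Hl0 Hl H0 (profile_support_allowed s' i l Hs' Hi Hl H1)).
    pose proof (coalition_move_cost_le s s' l Ns Ns' Hl ltac:(lra)).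
    lra.
Qed.

End ResourceSelection.

Theorem mainTheorem6 (n k : nat) (G : game n k) (s s' : nat -> nat -> R) :
  valid_game G -> strong_nash G s -> strong_nash G s' ->
  forall j, (j < n)%nat -> cost G s j = cost G s' j.
Proof.
  intros HG Hs Hs' j Hj.
  pose proof (strong_nash_cost_le n k G HG s s' j Hs (proj1 Hs') Hj).
  pose proof (strong_nash_cost_le n k G HG s' s j Hs' (proj1 Hs) Hj).
  lra.
Qed.
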